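(* Let $W_S(\theta_0,s)=\int_{\theta_0}^{\bar\theta}\big(\theta s(\theta)+v(\theta)\big)dF(\theta)$ for $\theta_0\in[0,\bar\theta)$ and $s\in\mathcal S(\theta_0)$ (social welfare with equal weights on revenue and consumer surplus, $\lambda=1$). Then $W_S$ is maximized over all such $(\theta_0,s)$ by $\theta_0=0$ and $s=F$ (full separation without exclusion).
   Context: Let $0<\bar\theta<\infty$, $\Theta=[0,\bar\theta]$, $F$ a cdf on $\Theta$ with continuous, strictly positive density $f$, $dF=f\,d\theta$. The intrinsic value $v:\Theta\to[0,\infty)$ is twice continuously differentiable with $v'\ge0$, $v''\le0$. For $\theta_0\in[0,\bar\theta)$ and bounded measurable $a,b$ on $[\theta_0,\bar\theta]$, write $b\in\mathrm{MPS}(a)$ if $\int_x^{\bar\theta}b\,dF\le\int_x^{\bar\theta}a\,dF$ for all $x\in[\theta_0,\bar\theta]$, with equality at $x=\theta_0$. $\mathcal S(\theta_0)$ is the set of nondecreasing $s:[\theta_0,\bar\theta]\to[0,1]$ with $s\in\mathrm{MPS}(F)$ on $[\theta_0,\bar\theta]$. *)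

From Stdlib Require Import Reals.
From Coquelicot Require Import Coquelicot.
Open Scope R_scope.

(* Integral against dF = f dθ over [a,b]. *)
Definition intF (f g : R -> R) (a b : R) : R := RInt (fun t => g t * f t) a b.

Definition MPS (f : R -> R) (thbar th0 : R) (a b : R -> R) : Prop :=
  (forall x, th0 <= x <= thbar -> intF f b x thbar <= intF f a x thbar) /\
  intF f b th0 thbar = intF f a th0 thbar.

Definition in_S (f F : R -> R) (thbar th0 : R) (s : R -> R) : Prop :=
  (forall x y, th0 <= x -> x <= y -> y <= thbar -> s x <= s y) /\
  (forall x, th0 <= x <= thbar -> 0 <= s x <= 1) /\
  MPS f thbar th0 F s.

Definition W_S (f v : R -> R) (thbar th0 : R) (s : R -> R) : R :=
  intF f (fun t => t * s t + v t) th0 thbar.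

From Stdlib Require Import Reals Lra Lia IndefiniteDescription.
From Coquelicot Require Import Coquelicot.
Open Scope R_scope.

(* On [th0, thbar] put h = (s - F) f: the mean-preserving-spread condition says that the tail
   H(x) = int_x^thbar h is nonpositive and vanishes at th0, so integrating by parts,
   int t h = th0 H(th0) + int H <= 0, i.e. s earns no more revenue than F.  Lowering the
   exclusion threshold to 0 then only adds the nonnegative integrands t F f and v f.
   Two technical points: a monotone [0,1]-valued function times a continuous one is Riemann
   integrable, as a uniform limit of staircase approximations built from superlevel sets; and
   since h need not be continuous, the integration by parts is obtained by showing that
   Psi u = int_u^thbar t h - u H(u) - int_u^thbar H satisfies |Psi u - Psi w| <= C (w - u)^2. *)

Lemma RInt_ChaslesR (g : R -> R) a b c :
  ex_RInt g a b -> ex_RInt g b c -> RInt g a b + RInt g b c = RInt g a c.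
Proof. exact (RInt_Chasles (V := R_CompleteNormedModule) g a b c). Qed.

Lemma RInt_plusR (g k : R -> R) a b : ex_RInt g a b -> ex_RInt k a b ->
  RInt (fun t => g t + k t) a b = RInt g a b + RInt k a b.
Proof. exact (RInt_plus (V := R_CompleteNormedModule) g k a b). Qed.

Lemma RInt_minusR (g k : R -> R) a b : ex_RInt g a b -> ex_RInt k a b ->
  RInt (fun t => g t - k t) a b = RInt g a b - RInt k a b.
Proof. exact (RInt_minus (V := R_CompleteNormedModule) g k a b). Qed.

Lemma ex_RInt_minusR (g k : R -> R) a b : ex_RInt g a b -> ex_RInt k a b ->
  ex_RInt (fun t => g t - k t) a b.
Proof. exact (ex_RInt_minus (V := R_NormedModule) g k a b). Qed.

Lemma ex_RInt_continuousR (g : R -> R) a b : a <= b ->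
  (forall t, a <= t <= b -> continuous g t) -> ex_RInt g a b.
Proof.
  intros Hab Hg. apply (ex_RInt_continuous (V := R_CompleteNormedModule)).
  intros t; rewrite Rmin_left, Rmax_right by lra; apply Hg.
Qed.

Lemma ex_RInt_plusR (g k : R -> R) a b : ex_RInt g a b -> ex_RInt k a b ->
  ex_RInt (fun t => g t + k t) a b.
Proof. exact (ex_RInt_plus (V := R_NormedModule) g k a b). Qed.

Lemma RInt_scalR (g : R -> R) l a b : ex_RInt g a b ->
  RInt (fun t => l * g t) a b = l * RInt g a b.
Proof. exact (RInt_scal (V := R_CompleteNormedModule) g a b l). Qed.

Lemma ex_RInt_scalR (g : R -> R) l a b : ex_RInt g a b -> ex_RInt (fun t => l * g t) a b.
Proof. exact (ex_RInt_scal (V := R_NormedModule) g a b l). Qed.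

Lemma ex_RInt_subinterval (g : R -> R) a b u v :
  a <= u -> u <= v -> v <= b -> ex_RInt g a b -> ex_RInt g u v.
Proof.
  intros Hau Huv Hvb Hg.
  apply (ex_RInt_Chasles_1 g u v b); [lra|].
  apply (ex_RInt_Chasles_2 g a u b); [lra|exact Hg].
Qed.

Lemma ex_RInt_bounded (g : R -> R) a b : a <= b -> ex_RInt g a b ->
  exists M, forall t, a <= t <= b -> Rabs (g t) <= M.
Proof.
  intros Hab Hg. destruct (ex_RInt_ub g a b Hg) as [M HM].
  exists M. intros t Ht. apply HM. rewrite Rmin_left, Rmax_right; lra.
Qed.

Lemma RInt_le_extend_left (g : R -> R) c a b : c <= a <= b -> ex_RInt g c b ->
  (forall t, c <= t <= a -> 0 <= g t) -> RInt g a b <= RInt g c b.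
Proof.
  intros Hcab Hg Hpos.
  assert (Hca : ex_RInt g c a) by (apply (ex_RInt_Chasles_1 g c a b); auto).
  assert (Hab : ex_RInt g a b) by (apply (ex_RInt_Chasles_2 g c a b); auto).
  rewrite <- (RInt_ChaslesR g c a b) by auto.
  enough (0 <= RInt g c a) by lra.
  apply RInt_ge_0; auto; [lra|]. intros; apply Hpos; lra.
Qed.

Definition clamp (a b x : R) : R := Rmax a (Rmin b x).

Lemma clamp_in a b x : a <= b -> a <= clamp a b x <= b.
Proof. intros. unfold clamp, Rmax, Rmin. repeat destruct Rle_dec; lra. Qed.

Lemma clamp_id a b x : a <= x <= b -> clamp a b x = x.
Proof. intros. unfold clamp, Rmax, Rmin. repeat destruct Rle_dec; lra. Qed.

Lemma clamp_lipschitz a b x y : a <= b -> Rabs (clamp a b x - clamp a b y) <= Rabs (x - y).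
Proof.
  intros. unfold clamp, Rmax, Rmin. repeat destruct Rle_dec; unfold Rabs;
  repeat destruct Rcase_abs; lra.
Qed.

Lemma ex_RInt_clamp (g : R -> R) a b :
  a <= b -> ex_RInt (fun t => g (clamp a b t)) a b -> ex_RInt g a b.
Proof.
  intros Hab. apply ex_RInt_ext. intros t.
  rewrite Rmin_left, Rmax_right by lra. intros; rewrite clamp_id; lra.
Qed.

Lemma ex_RInt_uniform_limit (G : R -> R) a b : a <= b ->
  (forall eps, 0 < eps -> exists H, ex_RInt H a b /\
     forall t, a <= t <= b -> Rabs (H t - G t) <= eps) ->
  ex_RInt G a b.
Proof.
  intros Hab Happrox.
  destruct (functional_choice (fun (n : nat) H => ex_RInt H a b /\
     forall t, a <= t <= b -> Rabs (H t - G t) <= / INR (S n))) as [Hs Hs_spec].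
  { intros n; apply Happrox, Rinv_0_lt_compat, lt_0_INR; lia. }
  (* Clamping makes the convergence uniform on all of R. *)
  destruct (filterlim_RInt (fun n t => Hs n (clamp a b t)) a b eventually _
     (fun t => G (clamp a b t)) (fun n => RInt (fun t => Hs n (clamp a b t)) a b))
    as [I [_ HI]].
  - intros n. apply RInt_correct, ex_RInt_ext with (Hs n); [|apply Hs_spec].
    intros t; rewrite Rmin_left, Rmax_right by lra; intros; rewrite clamp_id; lra.
  - apply filterlim_locally. intros eps.
    destruct (archimed_cor1 eps (cond_pos eps)) as [N [HN HN0]].
    exists N. intros n Hn t.
    apply Rle_lt_trans with (/ INR (S n)); [apply Hs_spec, clamp_in; lra|].
    apply Rle_lt_trans with (/ INR N); [|exact HN].
    apply Rinv_le_contravar; [apply lt_0_INR; lia|apply le_INR; lia].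
  - apply ex_RInt_clamp; [lra|]. exists I. exact HI.
Qed.

Lemma ex_RInt_superlevel (s g : R -> R) a b c : a <= b ->
  (forall x y, a <= x -> x <= y -> y <= b -> s x <= s y) ->
  (forall x y, a <= x -> x <= y -> y <= b -> ex_RInt g x y) ->
  ex_RInt (fun t => if Rle_dec c (s t) then g t else 0) a b.
Proof.
  intros Hab Hs Hg.
  (* The superlevel set {s >= c} is an up-interval of [a, b] starting at m. *)
  set (E := fun t => t = a \/ (a <= t <= b /\ s t < c)).
  destruct (completeness E) as [m [Hub Hlub]].
  { exists b. intros t [->|Ht]; lra. }
  { exists a. now left. }
  assert (Ham : a <= m) by (apply Hub; now left).
  assert (Hmb : m <= b) by (apply Hlub; intros t [->|Ht]; lra).
  apply ex_RInt_Chasles with m.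
  - apply ex_RInt_ext with (fun _ => 0); [|apply ex_RInt_const].
    intros x; rewrite Rmin_left, Rmax_right by lra; intros Hx.
    destruct Rle_dec as [Hcx|]; [exfalso|reflexivity].
    enough (m <= x) by lra.
    apply Hlub. intros t [->|[Ht Hst]]; [lra|].
    destruct (Rle_lt_dec t x) as [|Hxt]; [assumption|].
    assert (s x <= s t) by (apply Hs; lra). lra.
  - apply ex_RInt_ext with g; [|apply Hg; lra].
    intros x; rewrite Rmin_left, Rmax_right by lra; intros Hx.
    destruct Rle_dec as [|Hcx]; [reflexivity|exfalso].
    assert (x <= m) by (apply Hub; right; lra). lra.
Qed.

Fixpoint count_le (m : nat) (x : R) : R :=
  match m with
  | O => 0
  | S k => count_le k x + if Rle_dec (INR (S k)) x then 1 else 0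
  end.

Lemma count_le_spec m x : 0 <= x ->
  count_le m x <= x /\ count_le m x <= INR m /\
  (count_le m x = INR m \/ x - 1 < count_le m x).
Proof.
  intros Hx. induction m as [|m [IHx [IHm IHeq]]]; cbn [count_le].
  - simpl; lra.
  - rewrite S_INR in *. destruct Rle_dec as [Hle|Hlt].
    + assert (count_le m x = INR m) by (destruct IHeq; lra). lra.
    + destruct IHeq; lra.
Qed.

Lemma count_le_approx m x : 0 <= x <= INR m -> x - 1 < count_le m x <= x.
Proof.
  intros Hx. destruct (count_le_spec m x) as [H1 [_ [H3|H3]]]; lra.
Qed.

Lemma ex_RInt_count_le (s g : R -> R) a b m : a <= b ->
  (forall x y, a <= x -> x <= y -> y <= b -> s x <= s y) ->
  (forall x y, a <= x -> x <= y -> y <= b -> ex_RInt g x y) ->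
  ex_RInt (fun t => count_le m (s t) * g t) a b.
Proof.
  intros Hab Hs Hg. induction m as [|m IH]; cbn [count_le].
  - apply ex_RInt_ext with (fun _ => 0); [intros; symmetry; apply Rmult_0_l|apply ex_RInt_const].
  - apply ex_RInt_ext with (fun t => count_le m (s t) * g t +
        (if Rle_dec (INR (S m)) (s t) then g t else 0)).
    + intros t _. destruct Rle_dec; simpl; ring.
    + apply ex_RInt_plusR; [exact IH|]. apply ex_RInt_superlevel; auto.
Qed.

Lemma ex_RInt_monotone_mult (s g : R -> R) a b : a <= b ->
  (forall x y, a <= x -> x <= y -> y <= b -> s x <= s y) ->
  (forall x, a <= x <= b -> 0 <= s x <= 1) ->
  (forall x, a <= x <= b -> continuous g x) ->
  ex_RInt (fun t => s t * g t) a b.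
Proof.
  intros Hab Hs Hs01 Hg.
  assert (Hg_int : forall x y, a <= x -> x <= y -> y <= b -> ex_RInt g x y).
  { intros x y Hax Hxy Hyb. apply ex_RInt_continuousR; [lra|]. intros; apply Hg; lra. }
  destruct (ex_RInt_bounded g a b Hab (Hg_int a b (Rle_refl a) Hab (Rle_refl b))) as [M HM].
  assert (HM0 : 0 <= M) by (eapply Rle_trans; [apply Rabs_pos|apply (HM a); lra]).
  apply ex_RInt_uniform_limit; [exact Hab|]. intros eps Heps.
  (* Approximate s by the staircase count_le n (n s) / n, which is within 1/n of s. *)
  destruct (archimed_cor1 (eps / (M + 1))) as [n [Hn Hn0]]; [apply Rdiv_lt_0_compat; lra|].
  assert (Hn_pos : 0 < INR n) by (apply lt_0_INR; exact Hn0).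
  exists (fun t => / INR n * (count_le n (INR n * s t) * g t)). split.
  - apply ex_RInt_scalR, ex_RInt_count_le; auto.
    intros x y Hax Hxy Hyb. apply Rmult_le_compat_l; [lra|]. apply Hs; auto.
  - intros t Ht. specialize (Hs01 t Ht).
    destruct (count_le_approx n (INR n * s t)) as [Hlo Hhi]; [split; nra|].
    replace (/ INR n * (count_le n (INR n * s t) * g t) - s t * g t)
      with (/ INR n * ((count_le n (INR n * s t) - INR n * s t) * g t)) by (field; lra).
    rewrite Rabs_mult, Rabs_mult, Rabs_inv, (Rabs_right (INR n)) by lra.
    apply Rle_trans with (/ INR n * (M + 1)).
    + apply Rmult_le_compat_l; [left; apply Rinv_0_lt_compat; lra|].
      assert (Rabs (count_le n (INR n * s t) - INR n * s t) <= 1) by (apply Rabs_le; lra).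
      pose proof (HM t Ht). pose proof (Rabs_pos (g t)). nra.
    + left. apply Rlt_div_r; lra.
Qed.

Lemma quadratically_flat_const (P : R -> R) K :
  (forall x y, Rabs (P x - P y) <= K * (x - y) ^ 2) -> forall x y, P x = P y.
Proof.
  intros HP.
  assert (Hder : forall x, is_derive P x 0).
  { intros x. apply is_derive_Reals. intros eps Heps.
    assert (HK : 0 < Rabs K + 1) by (pose proof (Rabs_pos K); lra).
    exists (mkposreal _ (Rdiv_lt_0_compat _ _ Heps HK)); simpl. intros h Hh0 Hh.
    assert (Hq : Rabs (P (x + h) - P x) <= (Rabs K + 1) * Rabs h * Rabs h).
    { eapply Rle_trans; [apply HP|]. replace (x + h - x) with h by ring.
      rewrite <- pow2_abs. pose proof (Rle_abs K); pose proof (Rabs_pos h); nra. }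
    assert (Hh_pos : 0 < Rabs h) by (apply Rabs_pos_lt; exact Hh0).
    rewrite Rminus_0_r, Rabs_div by exact Hh0.
    apply Rle_lt_trans with ((Rabs K + 1) * Rabs h).
    - apply Rle_div_l; [lra|]. exact Hq.
    - rewrite Rmult_comm. apply Rlt_div_r; lra. }
  intros x y. destruct (Rtotal_order x y) as [Hxy|[<-|Hxy]]; [| reflexivity |symmetry];
  apply (eq_is_derive (V := R_NormedModule)); auto.
Qed.

Lemma lipschitz_continuous (P : R -> R) K :
  (forall x y, Rabs (P x - P y) <= K * Rabs (x - y)) -> forall x, continuous P x.
Proof.
  intros HP x. apply continuity_pt_filterlim. intros eps Heps.
  assert (HK : 0 < Rabs K + 1) by (pose proof (Rabs_pos K); lra).
  exists (eps / (Rabs K + 1)). split; [apply Rdiv_lt_0_compat; lra|].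
  intros y [_ Hy]. simpl in *. unfold R_dist in *.
  eapply Rle_lt_trans; [apply HP|].
  apply Rle_lt_trans with ((Rabs K + 1) * Rabs (y - x)).
  - pose proof (Rle_abs K); pose proof (Rabs_pos (y - x)); nra.
  - rewrite Rmult_comm. apply Rlt_div_r; lra.
Qed.

Section TailIntegral.

Variables (h : R -> R) (a b M : R).
Hypothesis Hab : a <= b.
Hypothesis h_int : ex_RInt h a b.
Hypothesis th_int : ex_RInt (fun t => t * h t) a b.
Hypothesis h_bound : forall t, a <= t <= b -> Rabs (h t) <= M.

Lemma bound_nonneg : 0 <= M.
Proof. apply Rle_trans with (Rabs (h a)); [apply Rabs_pos|apply h_bound; lra]. Qed.

Let tail (x : R) : R := RInt h x b.

Lemma tail_split u v : a <= u -> u <= v -> v <= b -> tail u = RInt h u v + tail v.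
Proof.
  intros Hau Huv Hvb. unfold tail. symmetry. apply RInt_ChaslesR.
  - apply ex_RInt_subinterval with a b; auto.
  - apply ex_RInt_subinterval with a b; auto; lra.
Qed.

Lemma RInt_h_bound u v : a <= u -> u <= v -> v <= b -> Rabs (RInt h u v) <= (v - u) * M.
Proof.
  intros Hau Huv Hvb. apply abs_RInt_le_const; auto.
  - apply ex_RInt_subinterval with a b; auto.
  - intros; apply h_bound; lra.
Qed.

Lemma tail_lipschitz u v : a <= u <= b -> a <= v <= b ->
  Rabs (tail u - tail v) <= M * Rabs (u - v).
Proof.
  assert (Hle : forall x y, a <= x -> x <= y -> y <= b ->
            Rabs (tail x - tail y) <= M * Rabs (x - y)).
  { intros x y Hax Hxy Hyb. rewrite (tail_split x y) by auto.
    unfold Rminus at 1. rewrite Rplus_assoc, Rplus_opp_r, Rplus_0_r.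
    rewrite (Rabs_minus_sym x y), (Rabs_right (y - x)), Rmult_comm by lra.
    apply RInt_h_bound; auto. }
  intros Hu Hv. destruct (Rle_dec u v).
  - apply Hle; lra.
  - rewrite Rabs_minus_sym, (Rabs_minus_sym u). apply Hle; lra.
Qed.

Let tailc (x : R) : R := tail (clamp a b x).

Lemma ex_RInt_tailc u v : ex_RInt tailc u v.
Proof.
  apply (ex_RInt_continuous (V := R_CompleteNormedModule)). intros x _.
  apply (lipschitz_continuous tailc M). intros y z.
  eapply Rle_trans; [apply tail_lipschitz; apply clamp_in, Hab|].
  apply Rmult_le_compat_l; [apply bound_nonneg|apply clamp_lipschitz, Hab].
Qed.

(* Psi is constant with value Psi b = 0; evaluated at a it is the integration-by-parts identity. *)
Let Psi (u : R) : R := RInt (fun t => t * h t) u b - u * tail u - RInt tailc u b.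

Lemma Psi_increment u v : a <= u -> u <= v -> v <= b ->
  Psi u - Psi v = RInt (fun t => (t - u) * h t) u v + RInt (fun t => tail v - tailc t) u v.
Proof.
  intros Hau Huv Hvb.
  assert (Hh : ex_RInt h u v) by (apply ex_RInt_subinterval with a b; auto).
  assert (Hth : forall x y, a <= x -> x <= y -> y <= b -> ex_RInt (fun t => t * h t) x y)
    by (intros; apply ex_RInt_subinterval with a b; auto).
  unfold Psi. rewrite (tail_split u v) by auto.
  rewrite <- (RInt_ChaslesR (fun t => t * h t) u v b) by (apply Hth; lra).
  rewrite <- (RInt_ChaslesR tailc u v b) by apply ex_RInt_tailc.
  rewrite (RInt_minusR (fun t => tail v) tailc), RInt_const by
    (apply ex_RInt_const || apply ex_RInt_tailc).
  rewrite (RInt_ext (fun t => (t - u) * h t) (fun t => t * h t - u * h t)) by (intros; simpl; ring).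
  rewrite RInt_minusR, RInt_scalR; auto; [|apply ex_RInt_scalR, Hh].
  unfold scal; simpl; unfold mult; simpl. ring.
Qed.

Lemma Psi_flat u v : a <= u -> u <= v -> v <= b -> Rabs (Psi u - Psi v) <= 2 * M * (v - u) ^ 2.
Proof.
  intros Hau Huv Hvb. rewrite Psi_increment by auto.
  eapply Rle_trans; [apply Rabs_triang|].
  replace (2 * M * (v - u) ^ 2) with ((v - u) * ((v - u) * M) + (v - u) * (M * (v - u)))
    by ring.
  apply Rplus_le_compat; apply abs_RInt_le_const; auto.
  - apply ex_RInt_ext with (fun t => t * h t - u * h t); [intros; simpl; ring|].
    apply ex_RInt_minusR; [|apply ex_RInt_scalR];
      apply ex_RInt_subinterval with a b; auto.
  - intros t Ht. rewrite Rabs_mult, (Rabs_right (t - u)) by lra.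
    apply Rmult_le_compat; try lra; [apply Rabs_pos|apply h_bound; lra].
  - apply ex_RInt_minusR; [apply ex_RInt_const|apply ex_RInt_tailc].
  - intros t Ht. unfold tailc. rewrite clamp_id by lra.
    eapply Rle_trans; [apply tail_lipschitz; lra|].
    apply Rmult_le_compat_l; [apply bound_nonneg|]. rewrite Rabs_right; lra.
Qed.

Lemma Psi_const : Psi a = Psi b.
Proof.
  enough (Hc : forall x y, Psi (clamp a b x) = Psi (clamp a b y)).
  { specialize (Hc a b). rewrite !clamp_id in Hc by lra. exact Hc. }
  apply (quadratically_flat_const (fun x => Psi (clamp a b x)) (2 * M)).
  intros x y.
  assert (Hsq : (clamp a b x - clamp a b y) ^ 2 <= (x - y) ^ 2).
  { rewrite <- (pow2_abs (x - y)), <- (pow2_abs (clamp a b x - clamp a b y)).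
    pose proof (clamp_lipschitz a b x y Hab); pose proof (Rabs_pos (clamp a b x - clamp a b y)).
    nra. }
  pose proof bound_nonneg.
  pose proof (clamp_in a b x Hab); pose proof (clamp_in a b y Hab).
  destruct (Rle_dec (clamp a b x) (clamp a b y)).
  - eapply Rle_trans; [apply Psi_flat; lra|].
    replace ((clamp a b y - clamp a b x) ^ 2) with ((clamp a b x - clamp a b y) ^ 2) by ring.
    apply Rmult_le_compat_l; lra.
  - rewrite Rabs_minus_sym. eapply Rle_trans; [apply Psi_flat; lra|].
    apply Rmult_le_compat_l; lra.
Qed.

End TailIntegral.

Lemma RInt_id_mult_by_parts (h : R -> R) a b : a <= b -> ex_RInt h a b ->
  ex_RInt (fun t => t * h t) a b ->
  RInt (fun t => t * h t) a b = a * RInt h a b + RInt (fun x => RInt h x b) a b.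
Proof.
  intros Hab Hh Hth. destruct (ex_RInt_bounded h a b Hab Hh) as [M HM].
  pose proof (Psi_const h a b M Hab Hh Hth HM) as HPsi.
  cbv beta in HPsi. rewrite !RInt_point in HPsi.
  rewrite (RInt_ext (fun x => RInt h (clamp a b x) b) (fun x => RInt h x b)) in HPsi.
  - unfold zero in HPsi; simpl in HPsi. lra.
  - intros x; rewrite Rmin_left, Rmax_right by lra; intros; rewrite clamp_id; lra.
Qed.

Lemma RInt_id_mult_nonpos (h : R -> R) a b : a <= b -> ex_RInt h a b ->
  ex_RInt (fun t => t * h t) a b ->
  (forall x, a <= x <= b -> RInt h x b <= 0) -> RInt h a b = 0 ->
  RInt (fun t => t * h t) a b <= 0.
Proof.
  intros Hab Hh Hth Htail Hzero.
  rewrite RInt_id_mult_by_parts, Hzero, Rmult_0_r, Rplus_0_l by auto.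
  destruct (ex_RInt_bounded h a b Hab Hh) as [M HM].
  apply Rle_trans with (RInt (fun _ => 0) a b).
  - apply RInt_le; auto.
    + apply ex_RInt_clamp; auto. apply (ex_RInt_tailc h a b M); auto.
    + apply ex_RInt_const.
    + intros; apply Htail; lra.
  - rewrite RInt_const. unfold scal; simpl; unfold mult; simpl. lra.
Qed.

Section Welfare.

Variables (thbar : R) (f F v : R -> R).
Hypothesis f_cont : forall x, 0 <= x <= thbar -> continuous f x.
Hypothesis f_pos : forall x, 0 <= x <= thbar -> 0 < f x.
Hypothesis F_cdf : forall x, 0 <= x <= thbar -> F x = RInt f 0 x.
Hypothesis F_total : RInt f 0 thbar = 1.
Hypothesis v_nonneg : forall x, 0 <= x <= thbar -> 0 <= v x.
Hypothesis v_cont : forall x, 0 <= x <= thbar -> continuous v x.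

Lemma F_nondecreasing x y : 0 <= x -> x <= y -> y <= thbar -> F x <= F y.
Proof.
  intros H0x Hxy Hy. rewrite !F_cdf by lra.
  assert (Hf : forall u w, 0 <= u -> u <= w -> w <= thbar -> ex_RInt f u w).
  { intros u w Hu Huw Hw. apply ex_RInt_continuousR; [lra|]. intros; apply f_cont; lra. }
  rewrite <- (RInt_ChaslesR f 0 x y) by (apply Hf; lra).
  enough (0 <= RInt f x y) by lra.
  apply RInt_ge_0; [lra|apply Hf; lra|]. intros t Ht. left; apply f_pos; lra.
Qed.

Lemma F_unit x : 0 <= x <= thbar -> 0 <= F x <= 1.
Proof.
  intros Hx. split.
  - replace 0 with (F 0) by (rewrite F_cdf, RInt_point by lra; reflexivity).
    apply F_nondecreasing; lra.
  - rewrite <- F_total, <- F_cdf by lra. apply F_nondecreasing; lra.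
Qed.

Lemma F_in_S : in_S f F thbar 0 F.
Proof.
  split; [|split; [exact F_unit|split; [intros; lra|reflexivity]]].
  intros; apply F_nondecreasing; lra.
Qed.

Lemma ex_RInt_S_weights (s : R -> R) a : 0 <= a <= thbar ->
  (forall x y, a <= x -> x <= y -> y <= thbar -> s x <= s y) ->
  (forall x, a <= x <= thbar -> 0 <= s x <= 1) ->
  ex_RInt (fun t => s t * f t) a thbar /\ ex_RInt (fun t => t * s t * f t) a thbar.
Proof.
  intros Ha Hs Hs01. split.
  - apply ex_RInt_monotone_mult; auto; [lra|]. intros; apply f_cont; lra.
  - apply ex_RInt_ext with (fun t => s t * (t * f t)); [intros; simpl; ring|].
    apply ex_RInt_monotone_mult; auto; [lra|]. intros x Hx.
    apply (continuous_mult (K := R_AbsRing) (fun t => t) f);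
      [apply continuous_id|apply f_cont; lra].
Qed.

Lemma revenue_le_cdf a s : 0 <= a < thbar -> in_S f F thbar a s ->
  RInt (fun t => t * s t * f t) a thbar <= RInt (fun t => t * F t * f t) a thbar.
Proof.
  intros Ha [s_mono [s_unit [s_tail s_total]]].
  assert (Hs : forall x, a <= x <= thbar -> ex_RInt (fun t => s t * f t) x thbar /\
                 ex_RInt (fun t => t * s t * f t) x thbar).
  { intros x Hx. apply ex_RInt_S_weights; [lra| |]; intros; [apply s_mono|apply s_unit]; lra. }
  assert (HF : forall x, 0 <= x <= thbar -> ex_RInt (fun t => F t * f t) x thbar /\
                 ex_RInt (fun t => t * F t * f t) x thbar).
  { intros x Hx. apply ex_RInt_S_weights; [lra| |]; intros; [apply F_nondecreasing|apply F_unit]; lra. }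
  set (h := fun t => s t * f t - F t * f t).
  assert (Hh_tail : forall x, a <= x <= thbar ->
            RInt h x thbar = intF f s x thbar - intF f F x thbar).
  { intros x Hx. apply RInt_minusR; [apply Hs|apply HF]; lra. }
  assert (Hth : RInt (fun t => t * h t) a thbar =
            RInt (fun t => t * s t * f t) a thbar - RInt (fun t => t * F t * f t) a thbar).
  { rewrite <- RInt_minusR by (apply Hs || apply HF; lra).
    apply RInt_ext. intros; unfold h; simpl; ring. }
  enough (RInt (fun t => t * h t) a thbar <= 0) by lra.
  apply RInt_id_mult_nonpos; [lra| | | |].
  - apply ex_RInt_minusR; [apply Hs|apply HF]; lra.
  - apply ex_RInt_ext with (fun t => t * s t * f t - t * F t * f t);
      [intros; unfold h; simpl; ring|].
    apply ex_RInt_minusR; [apply Hs|apply HF]; lra.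
  - intros x Hx. rewrite Hh_tail by lra. specialize (s_tail x Hx). lra.
  - rewrite Hh_tail, s_total by lra. apply Rminus_diag_eq; reflexivity.
Qed.

Lemma W_S_split (w : R -> R) c :
  ex_RInt (fun t => t * w t * f t) c thbar -> ex_RInt (fun t => v t * f t) c thbar ->
  W_S f v thbar c w = RInt (fun t => t * w t * f t) c thbar + RInt (fun t => v t * f t) c thbar.
Proof.
  intros Hw Hv. unfold W_S, intF. rewrite <- RInt_plusR by auto.
  apply RInt_ext. intros; simpl; ring.
Qed.

Lemma W_S_le_full a s : 0 <= a < thbar -> in_S f F thbar a s ->
  W_S f v thbar a s <= W_S f v thbar 0 F.
Proof.
  intros Ha Hs.
  assert (Hvf : forall x, 0 <= x <= thbar -> ex_RInt (fun t => v t * f t) x thbar).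
  { intros x Hx. apply ex_RInt_continuousR; [lra|]. intros t Ht.
    apply (continuous_mult (K := R_AbsRing) v f); [apply v_cont|apply f_cont]; lra. }
  assert (HF : ex_RInt (fun t => t * F t * f t) 0 thbar).
  { apply ex_RInt_S_weights; [lra| |]; intros; [apply F_nondecreasing|apply F_unit]; lra. }
  assert (Hs_int : ex_RInt (fun t => t * s t * f t) a thbar).
  { destruct Hs as [s_mono [s_unit _]]. apply ex_RInt_S_weights; auto; lra. }
  rewrite !W_S_split by ((apply Hvf; lra) || assumption).
  pose proof (revenue_le_cdf a s Ha Hs).
  assert (RInt (fun t => t * F t * f t) a thbar <= RInt (fun t => t * F t * f t) 0 thbar).
  { apply RInt_le_extend_left; [lra|exact HF|]. intros t Ht.
    pose proof (F_unit t ltac:(lra)).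
    apply Rmult_le_pos; [apply Rmult_le_pos|left; apply f_pos]; lra. }
  assert (RInt (fun t => v t * f t) a thbar <= RInt (fun t => v t * f t) 0 thbar).
  { apply RInt_le_extend_left; [lra|apply Hvf; lra|]. intros t Ht.
    apply Rmult_le_pos; [apply v_nonneg|left; apply f_pos]; lra. }
  lra.
Qed.

End Welfare.

Theorem corollary2 (thbar : R) (f F v : R -> R) :
  0 < thbar ->
  (forall x, 0 <= x <= thbar -> continuous f x) ->
  (forall x, 0 <= x <= thbar -> 0 < f x) ->
  (forall x, 0 <= x <= thbar -> F x = RInt f 0 x) ->
  RInt f 0 thbar = 1 ->
  (forall x, 0 <= x <= thbar -> 0 <= v x) ->
  (exists v1 v2 : R -> R,
      forall x, 0 <= x <= thbar ->
        is_derive v x (v1 x) /\ is_derive v1 x (v2 x) /\ continuous v2 x /\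
        0 <= v1 x /\ v2 x <= 0) ->
  in_S f F thbar 0 F /\
  (forall (th0 : R) (s : R -> R), 0 <= th0 < thbar -> in_S f F thbar th0 s ->
     W_S f v thbar th0 s <= W_S f v thbar 0 F).
Proof.
  intros Hthbar f_cont f_pos F_cdf F_total v_nonneg [v1 [v2 Hv]].
  (* With equal weights only continuity of v matters. *)
  assert (v_cont : forall x, 0 <= x <= thbar -> continuous v x).
  { intros x Hx. apply (ex_derive_continuous (V := R_NormedModule)).
    exists (v1 x). apply Hv, Hx. }
  split.
  - apply F_in_S; assumption.
  - intros th0 s Hth0 Hs. apply W_S_le_full; assumption.
Qed.
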